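(* Let $V$ be a quasi-regular mixed lattice vector space and let $\mathcal{R}(V)$ be the set of all regular quasi-ideals of $V$, ordered by inclusion. Then $\mathcal{R}(V)$ is a distributive lattice in which $A\vee B=A+B$ and $A\wedge B=A\cap B$. Moreover, $\mathcal{R}(V)$ has smallest element $\{0\}$ and largest element $V_{sp}-V_{sp}$.
   Context: A mixed lattice vector space is a real vector space $V$ with two partial orderings $\le$ (initial) and $\preceq$ (specific), each compatible with the vector space structure, such that for all $x,y$ the mixed lower envelope $x\curlywedge y=\max\{w: w\preceq x,\ w\le y\}$ and mixed upper envelope $x\curlyvee y=\min\{w: x\preceq w,\ y\le w\}$ exist (max/min with respect to $\le$). $V_{sp}=\{x:0\preceq x\}$, $E_{sp}=E\cap V_{sp}$. $V$ is quasi-regular if $V_{sp}$ is closed under $\curlywedge,\curlyvee$. A mixed lattice subspace is a linear subspace closed under $\curlywedge,\curlyvee$. A subspace $S$ is regular if $S=S_{sp}-S_{sp}$. A quasi-ideal is a mixed lattice subspace $A$ such that $y\in A$ and $0\preceq x\le y$ imply $x\in A$. *)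

From HB Require Import structures.
From mathcomp Require Import all_boot all_order all_algebra.
From mathcomp Require Import reals.
Set Implicit Arguments. Unset Strict Implicit. Unset Printing Implicit Defensive.
Import Order.TTheory GRing.Theory Num.Theory.
Local Open Scope ring_scope.

Section MixedLattice.
Variables (R : realType) (V : lmodType R).

Definition ordered_vs (le : V -> V -> Prop) : Prop :=
  [/\ (forall x, le x x),
      (forall x y, le x y -> le y x -> x = y),
      (forall x y z, le x y -> le y z -> le x z),
      (forall x y z, le x y -> le (x + z) (y + z)) &
      (forall (a : R) x y, 0 <= a -> le x y -> le (a *: x) (a *: y))].

Definition is_mlower (le sle : V -> V -> Prop) (x y w : V) : Prop :=
  [/\ sle w x, le w y & forall z, sle z x -> le z y -> le z w].

Definition is_mupper (le sle : V -> V -> Prop) (x y w : V) : Prop :=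
  [/\ sle x w, le y w & forall z, sle x z -> le y z -> le w z].

Record mixed_lattice_vs := MixedLatticeVS {
  ile : V -> V -> Prop;   (* initial order  <= *)
  sle : V -> V -> Prop;   (* specific order ⪯  *)
  ile_ordered : ordered_vs ile;
  sle_ordered : ordered_vs sle;
  mlower_ex : forall x y, exists w, is_mlower ile sle x y w;
  mupper_ex : forall x y, exists w, is_mupper ile sle x y w
}.

Variable M : mixed_lattice_vs.

Definition Vsp (x : V) : Prop := sle M 0 x.

Definition mclosed (S : V -> Prop) : Prop :=
  (forall x y w, S x -> S y -> is_mlower (ile M) (sle M) x y w -> S w) /\
  (forall x y w, S x -> S y -> is_mupper (ile M) (sle M) x y w -> S w).

Definition quasi_regular : Prop := mclosed Vsp.

Definition linear_subspace (S : V -> Prop) : Prop :=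
  [/\ S 0, (forall x y, S x -> S y -> S (x + y)) &
      (forall (a : R) x, S x -> S (a *: x))].

Definition mixed_lattice_subspace (S : V -> Prop) : Prop :=
  linear_subspace S /\ mclosed S.

Definition regular (S : V -> Prop) : Prop :=
  forall x, S x <-> exists a b, [/\ S a, Vsp a, S b, Vsp b & x = a - b].

Definition quasi_ideal (A : V -> Prop) : Prop :=
  mixed_lattice_subspace A /\
  (forall x y, A y -> sle M 0 x -> ile M x y -> A x).

Definition regular_quasi_ideal (A : V -> Prop) : Prop :=
  quasi_ideal A /\ regular A.

End MixedLattice.

Definition set_incl {V : Type} (A B : V -> Prop) : Prop := forall x, A x -> B x.
Definition set_eq {V : Type} (A B : V -> Prop) : Prop := forall x, A x <-> B x.
Definition set_cap {V : Type} (A B : V -> Prop) : V -> Prop := fun x => A x /\ B x.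
Definition set_sum {R : pzRingType} {V : lmodType R} (A B : V -> Prop) : V -> Prop :=
  fun x => exists a b, [/\ A a, B b & x = (a + b)%R].
Definition set_zero {R : pzRingType} {V : lmodType R} : V -> Prop := fun x => x = 0%R.
Definition Vsp_diff (R : realType) (V : lmodType R) (M : mixed_lattice_vs V) : V -> Prop :=
  fun x => exists a b, [/\ Vsp M a, Vsp M b & x = (a - b)%R].

From mathcomp Require Import all_boot all_order all_algebra.
From mathcomp Require Import reals.
Set Implicit Arguments. Unset Strict Implicit. Unset Printing Implicit Defensive.
Import Order.TTheory GRing.Theory Num.Theory.
Local Open Scope ring_scope.

(* The heart of the argument is a Riesz decomposition property of V_sp in a
   quasi-regular space: if 0 ⪯ x, y, z and x <= y + z, then x = (x ⋏ y) + (x - x ⋏ y)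
   splits x into specifically positive parts below y and below z.  Quasi-regularity
   also makes ⪯ stronger than <=.  With these, a regular subspace A that is solid
   (0 ⪯ x <= y ∈ A forces x ∈ A) is automatically closed under the mixed envelopes:
   translating by positive elements of A reduces x ⋏ y to an envelope of
   specifically positive elements, which lies below an element of A.  Sums,
   intersections, {0} and V_sp - V_sp are then seen to be regular and solid, and
   distributivity reduces, by regularity, to specifically positive elements of
   A ∩ (B + C), which the Riesz decomposition splits into A ∩ B and A ∩ C. *)

Section OrderedVectorSpace.
Variables (R : realType) (V : lmodType R) (le : V -> V -> Prop).
Hypothesis ordered : ordered_vs le.

Lemma ovs_refl x : le x x.
Proof. by case: ordered. Qed.

Lemma ovs_anti x y : le x y -> le y x -> x = y.
Proof. by case: ordered => _ anti _ _ _; apply: anti. Qed.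

Lemma ovs_trans y x z : le x y -> le y z -> le x z.
Proof. by case: ordered => _ _ trans _ _; apply: trans. Qed.

Lemma ovs_addr z x y : le x y -> le (x + z) (y + z).
Proof. by case: ordered => _ _ _ addr _; apply: addr. Qed.

Lemma ovs_add x y u v : le x y -> le u v -> le (x + u) (y + v).
Proof.
move=> lexy leuv; apply: (ovs_trans (ovs_addr u lexy)).
by rewrite ![y + _]addrC; apply: ovs_addr.
Qed.

Lemma ovs_subr_ge0 x y : le 0 (y - x) <-> le x y.
Proof.
split=> [/(ovs_addr x) | /(ovs_addr (- x))]; first by rewrite add0r subrK.
by rewrite subrr.
Qed.

Lemma ovs_subl c x y : le x y -> le (c - y) (c - x).
Proof. by move=> /ovs_subr_ge0 lexy; apply/ovs_subr_ge0; rewrite opprB addrC addrA subrK. Qed.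

Lemma ovs_scale_ge0 a x : 0 <= a -> le 0 x -> le 0 (a *: x).
Proof. by case: ordered => _ _ _ _ scale a_ge0 /(scale _ _ _ a_ge0); rewrite scaler0. Qed.

End OrderedVectorSpace.

Section LinearSubspace.
Variables (R : realType) (V : lmodType R).
Implicit Types S A B : V -> Prop.

Lemma subspace0 S : linear_subspace S -> S 0.
Proof. by case. Qed.

Lemma subspaceD S x y : linear_subspace S -> S x -> S y -> S (x + y).
Proof. by case=> _ addS _; apply: addS. Qed.

Lemma subspaceB S x y : linear_subspace S -> S x -> S y -> S (x - y).
Proof.
move=> subS Sx Sy; apply: subspaceD => //.
by case: subS => _ _ scaleS; rewrite -scaleN1r; apply: scaleS.
Qed.

Lemma subspace_sum A B :
  linear_subspace A -> linear_subspace B -> linear_subspace (set_sum A B).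
Proof.
move=> subA subB; split.
- by exists 0, 0; rewrite addr0; split=> //; apply: subspace0.
- move=> _ _ [a [b [Aa Bb ->]]] [a' [b' [Aa' Bb' ->]]].
  by exists (a + a'), (b + b'); rewrite addrACA; split=> //; apply: subspaceD.
- move=> c _ [a [b [Aa Bb ->]]]; exists (c *: a), (c *: b); rewrite scalerDr.
  by case: subA subB => _ _ scaleA [_ _ scaleB]; split; [apply: scaleA | apply: scaleB |].
Qed.

Lemma subspace_cap A B :
  linear_subspace A -> linear_subspace B -> linear_subspace (set_cap A B).
Proof.
case=> A0 addA scaleA [B0 addB scaleB]; split=> //.
- by move=> x y [Ax Bx] [Ay By]; split; [apply: addA | apply: addB].
- by move=> c x [Ax Bx]; split; [apply: scaleA | apply: scaleB].
Qed.

Lemma subspace_zero : linear_subspace (@set_zero R V).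
Proof. by split=> [|x y -> ->|a x ->]; rewrite /set_zero ?addr0 ?scaler0. Qed.

End LinearSubspace.

Section MixedEnvelopes.
Variables (R : realType) (V : lmodType R) (M : mixed_lattice_vs V).
Local Notation mlower := (is_mlower (ile M) (sle M)).
Local Notation mupper := (is_mupper (ile M) (sle M)).

Lemma Vsp0 : Vsp M 0.
Proof. exact: (ovs_refl (sle_ordered M)). Qed.

Lemma VspD a b : Vsp M a -> Vsp M b -> Vsp M (a + b).
Proof. by move=> Va Vb; have := ovs_add (sle_ordered M) Va Vb; rewrite addr0. Qed.

Lemma VspZ c a : 0 <= c -> Vsp M a -> Vsp M (c *: a).
Proof. exact: (ovs_scale_ge0 (sle_ordered M)). Qed.

Lemma mlowerDr z x y w : mlower x y w ->
  mlower (x + z) (y + z) (w + z).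
Proof.
case=> wx wy wmax; split.
- exact: (ovs_addr (sle_ordered M) z wx).
- exact: (ovs_addr (ile_ordered M) z wy).
- move=> t tx ty; rewrite -(subrK z t); apply: (ovs_addr (ile_ordered M)).
  apply: wmax; [have := ovs_addr (sle_ordered M) (- z) tx
               | have := ovs_addr (ile_ordered M) (- z) ty]; by rewrite addrK.
Qed.

Lemma mlower_uniq x y w w' : mlower x y w ->
  mlower x y w' -> w = w'.
Proof. by case=> wx wy wmax [w'x w'y w'max]; apply: (ovs_anti (ile_ordered M)); auto. Qed.

Lemma mupper_mlower x y u : mupper x y u ->
  mlower y x (x + y - u).
Proof.
have addKl : x + y - x = y by rewrite addrAC subrr add0r.
case=> xu yu umin; split.
- by have := ovs_subl (sle_ordered M) (x + y) xu; rewrite addKl.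
- by have := ovs_subl (ile_ordered M) (x + y) yu; rewrite addrK.
- move=> t ty tx; rewrite -[t](subKr (x + y)); apply: (ovs_subl (ile_ordered M)).
  apply: umin.
  + by have := ovs_subl (sle_ordered M) (x + y) ty; rewrite addrK.
  + by have := ovs_subl (ile_ordered M) (x + y) tx; rewrite addKl.
Qed.

Lemma regular_quasi_ideal_subspace A : regular_quasi_ideal M A -> linear_subspace A.
Proof. by case=> [[[]]]. Qed.

Lemma regular_quasi_ideal_solid A x y :
  regular_quasi_ideal M A -> A y -> Vsp M x -> ile M x y -> A x.
Proof. by case=> [[_ solidA] _]; apply: solidA. Qed.

Lemma regular_quasi_ideal_decomp A x : regular_quasi_ideal M A -> A x ->
  exists a b, [/\ A a, Vsp M a, A b, Vsp M b & x = a - b].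
Proof. by case=> _ regA /regA. Qed.

Section QuasiRegular.
Hypothesis qreg : quasi_regular M.

Lemma Vsp_mlower x y w :
  Vsp M x -> Vsp M y -> mlower x y w -> Vsp M w.
Proof. exact: qreg.1. Qed.

Lemma sle_ile x y : sle M x y -> ile M x y.
Proof.
move=> /(ovs_subr_ge0 (sle_ordered M)) Vyx; apply/(ovs_subr_ge0 (ile_ordered M)).
have [w wE] := mlower_ex M 0 (y - x).
have Vw : Vsp M w := Vsp_mlower Vsp0 Vyx wE.
case: wE => w_sle0 w_ile_yx _.
by have <- : w = 0 := ovs_anti (sle_ordered M) w_sle0 Vw.
Qed.

Lemma ile_addr_Vsp a b : Vsp M b -> ile M a (a + b).
Proof. by move=> /sle_ile /(ovs_addr (ile_ordered M) a); rewrite add0r addrC. Qed.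

Lemma ile_subr_Vsp a b : Vsp M b -> ile M (a - b) a.
Proof. by move=> /(ile_addr_Vsp (a - b)); rewrite subrK. Qed.

Lemma riesz_decomposition x y z : Vsp M x -> Vsp M y -> Vsp M z ->
  ile M x (y + z) ->
  exists x1 x2, [/\ x = x1 + x2, Vsp M x1, Vsp M x2, ile M x1 y & ile M x2 z].
Proof.
move=> Vx Vy Vz x_le_yz; have [w wE] := mlower_ex M x y.
have Vw := Vsp_mlower Vx Vy wE.
case: wE => wx wy wmax; exists w, (x - w); split=> //.
- by rewrite addrC subrK.
- exact/(ovs_subr_ge0 (sle_ordered M)).
- rewrite -[z](subKr x); apply: (ovs_subl (ile_ordered M)); apply: wmax.
  + by apply/(ovs_subr_ge0 (sle_ordered M)); rewrite subKr.
  + by have := ovs_addr (ile_ordered M) (- z) x_le_yz; rewrite addrK.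
Qed.

Section RegularSolidSubspace.
Variable S : V -> Prop.
Hypothesis subS : linear_subspace S.
Hypothesis regS : forall x, S x -> exists a b, [/\ S a, Vsp M a, S b, Vsp M b & x = a - b].
Hypothesis solidS : forall x y, S y -> Vsp M x -> ile M x y -> S x.

(* Writing x = p - q and y = p' - q', the translate of x ⋏ y by q + q' is
   (p + q') ⋏ (p' + q), which is specifically positive and below p' + q ∈ S. *)
Lemma regular_solid_mlower_closed x y w :
  S x -> S y -> mlower x y w -> S w.
Proof.
case/regS=> p [q [Sp Vp Sq Vq ->]]; case/regS=> p' [q' [Sp' Vp' Sq' Vq' ->]] wE.
have := mlowerDr (q + q') wE; rewrite subrKA [q + q']addrC subrKA => wE'.
rewrite -(addrK (q' + q) w); apply: (subspaceB subS _ (subspaceD subS Sq' Sq)).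
apply: (solidS (y := p' + q)); first exact: subspaceD.
- by apply: Vsp_mlower wE'; apply: VspD.
- by case: wE'.
Qed.

Lemma regular_solid_mupper_closed x y u :
  S x -> S y -> mupper x y u -> S u.
Proof.
move=> Sx Sy /mupper_mlower uE; rewrite -[u](subKr (x + y)).
by apply: (subspaceB subS (subspaceD subS Sx Sy)); apply: regular_solid_mlower_closed uE.
Qed.

Lemma regular_quasi_ideal_of_solid : regular_quasi_ideal M S.
Proof.
split; [split; [split=> //; split | exact: solidS] |].
- exact: regular_solid_mlower_closed.
- exact: regular_solid_mupper_closed.
- move=> x; split; first exact: regS.
  by case=> a [b [Sa _ Sb _ ->]]; apply: subspaceB.
Qed.

End RegularSolidSubspace.

Lemma regular_quasi_ideal_sum_decomp A B x a b :
  regular_quasi_ideal M A -> regular_quasi_ideal M B ->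
  Vsp M x -> A a -> B b -> ile M x (a + b) ->
  exists x1 x2, [/\ x = x1 + x2, Vsp M x1, Vsp M x2, A x1 & B x2].
Proof.
move=> rqiA rqiB Vx Aa Bb x_le_ab.
case: (regular_quasi_ideal_decomp rqiA Aa) => a1 [a2 [Aa1 Va1 _ Va2 Ea]].
case: (regular_quasi_ideal_decomp rqiB Bb) => b1 [b2 [Bb1 Vb1 _ Vb2 Eb]].
have x_le_ab1 : ile M x (a1 + b1).
  rewrite Ea Eb in x_le_ab; apply: (ovs_trans (ile_ordered M) x_le_ab).
  by apply: (ovs_add (ile_ordered M)); apply: ile_subr_Vsp.
have [x1 [x2 [-> Vx1 Vx2 x1a1 x2b1]]] := riesz_decomposition Vx Va1 Vb1 x_le_ab1.
exists x1, x2; split=> //.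
- exact: (regular_quasi_ideal_solid rqiA Aa1 Vx1 x1a1).
- exact: (regular_quasi_ideal_solid rqiB Bb1 Vx2 x2b1).
Qed.

Lemma regular_quasi_ideal_sum A B :
  regular_quasi_ideal M A -> regular_quasi_ideal M B ->
  regular_quasi_ideal M (set_sum A B).
Proof.
move=> rqiA rqiB.
have subA := regular_quasi_ideal_subspace rqiA.
have subB := regular_quasi_ideal_subspace rqiB.
apply: regular_quasi_ideal_of_solid; first exact: subspace_sum.
- move=> _ [a [b [Aa Bb ->]]].
  case: (regular_quasi_ideal_decomp rqiA Aa) => a1 [a2 [Aa1 Va1 Aa2 Va2 ->]].
  case: (regular_quasi_ideal_decomp rqiB Bb) => b1 [b2 [Bb1 Vb1 Bb2 Vb2 ->]].
  exists (a1 + b1), (a2 + b2); rewrite opprD addrACA.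
  by split; [exists a1, b1 | exact: VspD | exists a2, b2 | exact: VspD |].
- move=> x _ [a [b [Aa Bb ->]]] Vx x_le_ab.
  have [x1 [x2 [-> _ _ Ax1 Bx2]]] :=
    regular_quasi_ideal_sum_decomp rqiA rqiB Vx Aa Bb x_le_ab.
  by exists x1, x2.
Qed.

(* If x = a1 - a2 = b1 - b2, translation invariance gives a2 ⋏ b2 + x = a1 ⋏ b1. *)
Lemma regular_quasi_ideal_cap A B :
  regular_quasi_ideal M A -> regular_quasi_ideal M B ->
  regular_quasi_ideal M (set_cap A B).
Proof.
move=> rqiA rqiB.
have mlower_in_cap p a b : A a -> B b -> mlower a b p ->
    Vsp M a -> Vsp M b -> set_cap A B p /\ Vsp M p.
  move=> Aa Bb pE Va Vb; have Vp := Vsp_mlower Va Vb pE.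
  case: pE => pa pb _; split=> //; split.
  - exact: (regular_quasi_ideal_solid rqiA Aa Vp (sle_ile pa)).
  - exact: (regular_quasi_ideal_solid rqiB Bb Vp pb).
apply: regular_quasi_ideal_of_solid.
- exact: (subspace_cap (regular_quasi_ideal_subspace rqiA)
                      (regular_quasi_ideal_subspace rqiB)).
- move=> x [Ax Bx].
  case: (regular_quasi_ideal_decomp rqiA Ax) => a1 [a2 [Aa1 Va1 Aa2 Va2 Ea]].
  case: (regular_quasi_ideal_decomp rqiB Bx) => b1 [b2 [Bb1 Vb1 Bb2 Vb2 Eb]].
  have [p pE] := mlower_ex M a1 b1; have [q qE] := mlower_ex M a2 b2.
  have pq : p = q + x.
    have a2x : a2 + x = a1 by rewrite Ea addrC subrK.
    have b2x : b2 + x = b1 by rewrite Eb addrC subrK.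
    by apply: mlower_uniq pE _; have := mlowerDr x qE; rewrite a2x b2x.
  have [ABp Vp] := mlower_in_cap _ _ _ Aa1 Bb1 pE Va1 Vb1.
  have [ABq Vq] := mlower_in_cap _ _ _ Aa2 Bb2 qE Va2 Vb2.
  by exists p, q; split=> //; rewrite pq [q + x]addrC addrK.
- move=> x y [Ay By] Vx x_le_y; split.
  + exact: (regular_quasi_ideal_solid rqiA Ay Vx x_le_y).
  + exact: (regular_quasi_ideal_solid rqiB By Vx x_le_y).
Qed.

Lemma regular_quasi_ideal_zero : regular_quasi_ideal M set_zero.
Proof.
apply: regular_quasi_ideal_of_solid; first exact: subspace_zero.
- by move=> _ ->; exists 0, 0; rewrite subr0; split=> //; exact: Vsp0.
- move=> x _ -> Vx x_le0; apply: (ovs_anti (ile_ordered M)) => //.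
  exact: sle_ile.
Qed.

Lemma subspace_Vsp_diff : linear_subspace (Vsp_diff M).
Proof.
split.
- by exists 0, 0; rewrite subr0; split=> //; exact: Vsp0.
- move=> _ _ [a [b [Va Vb ->]]] [a' [b' [Va' Vb' ->]]].
  by exists (a + a'), (b + b'); rewrite opprD addrACA; split=> //; exact: VspD.
- move=> c _ [a [b [Va Vb ->]]]; have [c_ge0 | c_lt0] := lerP 0 c.
  + by exists (c *: a), (c *: b); rewrite scalerBr; split=> //; exact: VspZ.
  + have Nc_ge0 : 0 <= - c by rewrite oppr_ge0 ltW.
    exists ((- c) *: b), ((- c) *: a); split; try exact: VspZ.
    by rewrite !scaleNr opprK scalerBr addrC.
Qed.

Lemma regular_quasi_ideal_Vsp_diff : regular_quasi_ideal M (Vsp_diff M).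
Proof.
have Vsp_diffE x : Vsp M x -> Vsp_diff M x.
  by move=> Vx; exists x, 0; rewrite subr0; split=> //; exact: Vsp0.
apply: regular_quasi_ideal_of_solid; first exact: subspace_Vsp_diff.
- by move=> _ [a [b [Va Vb ->]]]; exists a, b; split=> //; exact: Vsp_diffE.
- by move=> x _ _ Vx _; exact: Vsp_diffE.
Qed.

Lemma regular_quasi_ideal_cap_sum A B C :
  regular_quasi_ideal M A -> regular_quasi_ideal M B -> regular_quasi_ideal M C ->
  set_incl (set_cap A (set_sum B C)) (set_sum (set_cap A B) (set_cap A C)).
Proof.
move=> rqiA rqiB rqiC.
have sub_sum := subspace_sum
  (subspace_cap (regular_quasi_ideal_subspace rqiA) (regular_quasi_ideal_subspace rqiB))
  (subspace_cap (regular_quasi_ideal_subspace rqiA) (regular_quasi_ideal_subspace rqiC)).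
have cap_sum_Vsp p : A p -> set_sum B C p -> Vsp M p ->
    set_sum (set_cap A B) (set_cap A C) p.
  move=> Ap [b [c [Bb Cc Ep]]] Vp.
  have p_le_bc : ile M p (b + c) by rewrite -Ep; exact: (ovs_refl (ile_ordered M)).
  have [x1 [x2 [Ep' Vx1 Vx2 Bx1 Cx2]]] :=
    regular_quasi_ideal_sum_decomp rqiB rqiC Vp Bb Cc p_le_bc.
  exists x1, x2; split=> //; split=> //; apply: regular_quasi_ideal_solid rqiA Ap _ _ => //.
  + by rewrite Ep'; exact: ile_addr_Vsp.
  + by rewrite Ep' addrC; exact: ile_addr_Vsp.
have rqi_cap := regular_quasi_ideal_cap rqiA (regular_quasi_ideal_sum rqiB rqiC).
move=> x /(regular_quasi_ideal_decomp rqi_cap) [p [q [[Ap BCp] Vp [Aq BCq] Vq ->]]].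
by apply: (subspaceB sub_sum); exact: cap_sum_Vsp.
Qed.

End QuasiRegular.
End MixedEnvelopes.

Theorem theorem4p18 (R : realType) (V : lmodType R) (M : mixed_lattice_vs V)
  (HqM : quasi_regular M) :
  (* A + B and A ∩ B are in R(V) and are the join and meet w.r.t. inclusion *)
  (forall A B, regular_quasi_ideal M A -> regular_quasi_ideal M B ->
     ([/\ regular_quasi_ideal M (set_sum A B),
          set_incl A (set_sum A B), set_incl B (set_sum A B) &
          (forall C, regular_quasi_ideal M C -> set_incl A C -> set_incl B C ->
             set_incl (set_sum A B) C)] /\
      [/\ regular_quasi_ideal M (set_cap A B),
          set_incl (set_cap A B) A, set_incl (set_cap A B) B &
          (forall C, regular_quasi_ideal M C -> set_incl C A -> set_incl C B ->
             set_incl C (set_cap A B))])) /\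
  (* distributivity *)
  (forall A B C, regular_quasi_ideal M A -> regular_quasi_ideal M B ->
     regular_quasi_ideal M C ->
     set_eq (set_cap A (set_sum B C)) (set_sum (set_cap A B) (set_cap A C))) /\
  (* smallest element {0} *)
  (regular_quasi_ideal M set_zero /\
   forall A, regular_quasi_ideal M A -> set_incl set_zero A) /\
  (* largest element V_sp - V_sp *)
  (regular_quasi_ideal M (Vsp_diff M) /\
   forall A, regular_quasi_ideal M A -> set_incl A (Vsp_diff M)).
Proof.
have rqi_subspace := @regular_quasi_ideal_subspace R V M.
split; [|split; [|split]].
- move=> A B rqiA rqiB.
  have /subspace0 A0 := rqi_subspace _ rqiA; have /subspace0 B0 := rqi_subspace _ rqiB.
  split; split.
  + exact: regular_quasi_ideal_sum.
  + by move=> x Ax; exists x, 0; rewrite addr0.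
  + by move=> x Bx; exists 0, x; rewrite add0r.
  + by move=> C /rqi_subspace subC AC BC _ [a [b [Aa Bb ->]]]; apply: subspaceD; auto.
  + exact: regular_quasi_ideal_cap.
  + by move=> x [].
  + by move=> x [].
  + by move=> C _ CA CB x Cx; split; auto.
- move=> A B C rqiA rqiB rqiC x; split.
  + exact: (regular_quasi_ideal_cap_sum HqM rqiA rqiB rqiC).
  + case=> u [v [[Au Bu] [Av Cv] ->]]; split; last by exists u, v.
    exact: (subspaceD (rqi_subspace _ rqiA) Au Av).
- split; first exact: regular_quasi_ideal_zero.
  by move=> A /rqi_subspace/subspace0 A0 x ->.
- split; first exact: regular_quasi_ideal_Vsp_diff.
  by move=> A rqiA x /(regular_quasi_ideal_decomp rqiA) [a [b [_ Va _ Vb ->]]]; exists a, b.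
Qed.
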